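(* Let ${\cal C}\subseteq\mathbb{Z}_2^\alpha\times\mathbb{Z}_4^\beta$ be a $\mathbb{Z}_2\mathbb{Z}_4$-additive code such that $\Phi({\cal C})$ is a linear binary code. Then ${\cal C}_Y$ is a $\mathbb{Z}_4$-additive code such that $\phi({\cal C}_Y)$ is a linear binary code.
   Context: A $\mathbb{Z}_2\mathbb{Z}_4$-additive code is a subgroup of $\mathbb{Z}_2^\alpha\times\mathbb{Z}_4^\beta$; ${\cal C}_Y$ is its projection onto the last $\beta$ ($\mathbb{Z}_4$) coordinates. Writing each $u'_i\in\mathbb{Z}_4$ as $u'_i=\tilde u'_i+2\hat u'_i$ with $\tilde u'_i,\hat u'_i\in\{0,1\}$, the Gray map $\phi:\mathbb{Z}_4^n\to\mathbb{Z}_2^{2n}$ is $\phi(u')=(\hat u'_0,\dots,\hat u'_{n-1},\tilde u'_0+\hat u'_0,\dots,\tilde u'_{n-1}+\hat u'_{n-1})$, and the extended Gray map is $\Phi(u\mid u')=(u\mid\phi(u'))\in\mathbb{Z}_2^{\alpha+2\beta}$. A binary code is linear if it is a $\mathbb{Z}_2$-subspace. *)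

From HB Require Import structures.
From mathcomp Require Import all_boot all_order all_algebra.
Set Implicit Arguments. Unset Strict Implicit. Unset Printing Implicit Defensive.
Import GRing.Theory.
Local Open Scope ring_scope.

Definition Z2Z4 (alpha beta : nat) := ('rV['Z_2]_alpha * 'rV['Z_4]_beta)%type.

Definition is_subgroup (G : zmodType) (C : {pred G}) : Prop :=
  [/\ 0 \in C,
      forall x y, x \in C -> y \in C -> x + y \in C &
      forall x, x \in C -> - x \in C].

Definition Z2Z4_additive (alpha beta : nat) (C : {set Z2Z4 alpha beta}) : Prop :=
  is_subgroup (fun x : Z2Z4 alpha beta => x \in C).

Definition Z4_additive (beta : nat) (C : {set 'rV['Z_4]_beta}) : Prop :=
  is_subgroup (fun x : 'rV['Z_4]_beta => x \in C).

Definition binary_linear (n : nat) (S : {set 'rV['Z_2]_n}) : Prop :=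
  [/\ 0 \in S,
      forall x y, x \in S -> y \in S -> x + y \in S &
      forall (a : 'Z_2) x, x \in S -> a *: x \in S].

Definition tilde (x : 'Z_4) : 'Z_2 := ((x : nat) %% 2)%:R.
Definition hat (x : 'Z_4) : 'Z_2 := ((x : nat) %/ 2)%:R.

Definition gray (n : nat) (u : 'rV['Z_4]_n) : 'rV['Z_2]_(n + n) :=
  row_mx (\row_i hat (u 0 i)) (\row_i (tilde (u 0 i) + hat (u 0 i))).

Definition Gray (alpha beta : nat) (x : Z2Z4 alpha beta)
  : 'rV['Z_2]_(alpha + (beta + beta)) :=
  row_mx x.1 (gray x.2).

Definition CY (alpha beta : nat) (C : {set Z2Z4 alpha beta}) : {set 'rV['Z_4]_beta} :=
  [set x.2 | x in C].

From mathcomp Require Import all_boot all_order all_algebra.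
Import GRing.Theory.
Local Open Scope ring_scope.

(* C_Y is the image of C under the additive projection onto the Z4 part, and
   phi(C_Y) is the image of Phi(C) under the linear projection onto the last
   2 beta binary coordinates, since Phi(u | u') = (u | phi(u')). Additive
   images of subgroups are subgroups and linear images of subspaces are
   subspaces. *)

Lemma is_subgroup_imset_snd (G1 G2 : finZmodType) (C : {set G1 * G2}) :
  is_subgroup (fun x : G1 * G2 => x \in C) -> is_subgroup (fun y : G2 => y \in snd @: C).
Proof.
move=> [C0 CD CN]; split.
- by apply/imsetP; exists 0.
- move=> _ _ /imsetP[x Cx ->] /imsetP[y Cy ->].
  by apply/imsetP; exists (x + y); rewrite ?CD.
- move=> _ /imsetP[x Cx ->].
  by apply/imsetP; exists (- x); rewrite ?CN.
Qed.

Lemma binary_linear_imset m n (f : {linear 'rV['Z_2]_m -> 'rV['Z_2]_n})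
    (S : {set 'rV['Z_2]_m}) :
  binary_linear S -> binary_linear (f @: S).
Proof.
move=> [S0 SD SZ]; split.
- by apply/imsetP; exists 0; rewrite ?linear0.
- move=> _ _ /imsetP[x Sx ->] /imsetP[y Sy ->].
  by apply/imsetP; exists (x + y); rewrite ?linearD ?SD.
- move=> a _ /imsetP[x Sx ->].
  by apply/imsetP; exists (a *: x); rewrite ?linearZ ?SZ.
Qed.

Lemma rsubmx_Gray alpha beta (x : Z2Z4 alpha beta) : rsubmx (Gray x) = gray x.2.
Proof. exact: row_mxKr. Qed.

Lemma gray_CY alpha beta (C : {set Z2Z4 alpha beta}) :
  [set gray y | y in CY C] = rsubmx @: [set Gray x | x in C].
Proof.
by rewrite /CY -!imset_comp; apply: eq_imset => x /=; rewrite rsubmx_Gray.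
Qed.

Theorem mainTheorem3 (alpha beta : nat) (C : {set Z2Z4 alpha beta}) :
  Z2Z4_additive C ->
  binary_linear [set Gray x | x in C] ->
  Z4_additive (CY C) /\ binary_linear [set gray y | y in CY C].
Proof.
move=> C_additive GrayC_linear; split.
- exact: is_subgroup_imset_snd.
- by rewrite gray_CY; apply: binary_linear_imset.
Qed.
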